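(* Consider a finite Markov chain on a set $Q$ of states with $|Q|=n$. Let $x$ denote the smallest nonzero transition probability of the chain. Let $p\in Q$ and $S\subseteq Q$. For runs starting in $p$, define $T=k$ if the run hits a state of $S$ for the first time after exactly $k$ steps, and let $T$ be undefined if the run never hits $S$. Then $\mathcal{P}(T\ge k)\le 2c^k$ for all $k\ge n$, where $c:=\exp(-x^n/n)$.
   Context: $\mathcal{P}(T\ge k)$ denotes the probability of the set of runs from $p$ for which $T$ is defined and $T\ge k$. *)

From HB Require Import structures.
From mathcomp Require Import all_boot all_order all_algebra.
From mathcomp Require Import all_classical all_reals all_analysis.
Set Implicit Arguments. Unset Strict Implicit. Unset Printing Implicit Defensive.
Import Order.TTheory GRing.Theory Num.Theory.
Local Open Scope ring_scope.

Definition stochastic (R : realType) (Q : finType) (P : Q -> Q -> R) : Prop :=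
  (forall q r, 0 <= P q r) /\ (forall q, \sum_(r : Q) P q r = 1).

(* smallest nonzero transition probability (all probabilities are <= 1, so 1
   is a neutral start value for min) *)
Definition min_nonzero_prob (R : realType) (Q : finType) (P : Q -> Q -> R) : R :=
  \big[Num.min/1]_(qr : Q * Q | P qr.1 qr.2 != 0) P qr.1 qr.2.

(* Probability of the set of runs from p with T = j, i.e. runs whose first
   visit to S happens at step exactly j: the sum, over all paths
   f 0 = p, f 1, ..., f j with f i \notin S for i < j and f j \in S, of the
   product of the transition probabilities along the path. *)
Definition first_hit_prob (R : realType) (Q : finType) (P : Q -> Q -> R)
    (S : {set Q}) (p : Q) (j : nat) : R :=
  \sum_(f : {ffun 'I_j.+1 -> Q} |
          [&& f ord0 == p, f ord_max \in S &
              [forall i : 'I_j.+1, (i < j)%N ==> (f i \notin S)]])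
    \prod_(i < j) P (f (inord i)) (f (inord i.+1)).

From HB Require Import structures.
From mathcomp Require Import all_boot all_order all_algebra.
From mathcomp Require Import all_classical all_reals all_analysis.
From mathcomp Require Import lra zify.
Set Implicit Arguments. Unset Strict Implicit. Unset Printing Implicit Defensive.
Import Order.TTheory GRing.Theory Num.Theory.
Local Open Scope ring_scope.

(* Let K be the transition operator of the chain killed on S, (K f) q = 0 for
   q in S and sum_r P q r * f r otherwise.  The probability of T = j is
   (K^j 1_S) p, so the mass of T in [k, k + M] is (K^k h_M) p, where
   0 <= h_M <= 1 is the probability of hitting S within M steps.  The sets of
   states from which S is unreachable within M steps decrease with M, hence
   stabilize before step n = |Q| at a set D closed under transitions, on which
   all the K^j h_M vanish.  Outside D, S is reached within n - 1 steps along a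
   path of probability at least x^(n-1), so K^n maps functions with values in
   [0, m] vanishing on D to functions with values in [0, (1 - x^n) m].  Thus
   P(T >= k) <= (1 - x^n)^(k %/ n), and the factor 2 pays for rounding k / n
   down, since 1 - y <= 2 exp(-2y). *)

Lemma eq_from_stable (T : Type) (a : nat -> T) i :
  (forall j, a j.+1 = a j -> a j.+2 = a j.+1) -> a i.+1 = a i ->
  forall j, (i <= j)%N -> a j = a i.
Proof.
move=> stable ai.
suff H : forall d, a (i + d)%N.+1 = a (i + d)%N /\ a (i + d)%N = a i.
  by move=> j /subnKC <-; have [_ ->] := H (j - i)%N.
elim=> [|d [IHs IHe]]; first by rewrite addn0 ai.
by rewrite addnS; split; [exact: stable IHs | rewrite IHs IHe].
Qed.

Lemma decreasing_sets_stabilize (T : finType) (A : nat -> {set T}) :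
  (forall i, A i.+1 \subset A i) -> exists2 i, (i <= #|A 0|)%N & A i.+1 = A i.
Proof.
move=> decr.
have [/existsP [i /eqP Ei]|/existsPn neq] :=
  boolP [exists i : 'I_#|A 0|.+1, A i.+1 == A i]; first by exists i; rewrite // -ltnS.
suff /(_ #|A 0|.+1 (leqnn _)) : forall i, (i <= #|A 0|.+1)%N -> (#|A i| + i <= #|A 0|)%N.
  by move/(leq_trans (leq_addl _ _)); rewrite ltnn.
elim=> [|i IH] lti; first by rewrite addn0.
have /proper_card lt_card : A i.+1 \proper A i.
  by rewrite finset.properEneq (neq (Ordinal lti)) decr.
by rewrite addnS (leq_trans _ (IH (ltnW lti))) // ltn_add2r.
Qed.

Section PathCons.
Variable T : finType.

Definition ffun_cons (m : nat) (a : T) (g : {ffun 'I_m -> T}) : {ffun 'I_m.+1 -> T} :=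
  [ffun i => if unlift ord0 i is Some i' then g i' else a].

Lemma ffun_cons0 m a (g : {ffun 'I_m -> T}) : ffun_cons a g ord0 = a.
Proof. by rewrite ffunE unlift_none. Qed.

Lemma ffun_cons_lift m a (g : {ffun 'I_m -> T}) i : ffun_cons a g (lift ord0 i) = g i.
Proof. by rewrite ffunE liftK. Qed.

Lemma big_ffun_cons m (R : Type) (idx : R) (op : Monoid.com_law idx)
    (F : {ffun 'I_m.+1 -> T} -> R) :
  \big[op/idx]_f F f = \big[op/idx]_a \big[op/idx]_g F (ffun_cons a g).
Proof.
rewrite pair_big /= (reindex (fun ag => ffun_cons ag.1 ag.2)) //=.
exists (fun f => (f ord0, [ffun i => f (lift ord0 i)])) => [[a g] _|f _] /=.
  by rewrite ffun_cons0; congr pair; apply/ffunP => i; rewrite ffunE ffun_cons_lift.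
apply/ffunP => i; case: (unliftP ord0 i) => [j ->|->].
  by rewrite ffun_cons_lift ffunE.
by rewrite ffun_cons0.
Qed.

Lemma inord0 m : (inord 0 : 'I_m.+1) = ord0.
Proof. by apply/val_inj; rewrite /= inordK. Qed.

Lemma inordS_lift m i : (i <= m)%N ->
  (inord i.+1 : 'I_m.+2) = lift ord0 (inord i : 'I_m.+1).
Proof. by move=> lei; apply/val_inj; rewrite /= /bump /= !inordK. Qed.

Lemma big_path_cons m (R : Type) (idx : R) (op : Monoid.law idx) (F : T -> T -> R)
    a (g : {ffun 'I_m.+1 -> T}) :
  \big[op/idx]_(i < m.+1) F (ffun_cons a g (inord i)) (ffun_cons a g (inord i.+1)) =
  op (F a (g ord0)) (\big[op/idx]_(i < m) F (g (inord i)) (g (inord i.+1))).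
Proof.
rewrite big_ord_recl inord0 ffun_cons0 inordS_lift // ffun_cons_lift inord0.
congr (op _ _); apply: eq_bigr => i _.
by rewrite lift0 !inordS_lift ?ffun_cons_lift // ltnW.
Qed.

Lemma first_hit_path_cons m (S : {set T}) p a (g : {ffun 'I_m.+1 -> T}) :
  [&& ffun_cons a g ord0 == p, ffun_cons a g ord_max \in S &
     [forall i : 'I_m.+2, (i < m.+1)%N ==> (ffun_cons a g i \notin S)]] =
  [&& a == p, a \notin S, g ord_max \in S &
     [forall i : 'I_m.+1, (i < m)%N ==> (g i \notin S)]].
Proof.
have -> : ord_max = lift ord0 (ord_max : 'I_m.+1) by apply/val_inj.
rewrite ffun_cons0 ffun_cons_lift.
have -> : [forall i : 'I_m.+2, (i < m.+1)%N ==> (ffun_cons a g i \notin S)] =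
    (a \notin S) && [forall i : 'I_m.+1, (i < m)%N ==> (g i \notin S)].
  apply/forallP/andP => [avoid|[aS /forallP avoid] i].
    split; first by have := avoid ord0; rewrite ffun_cons0.
    by apply/forallP => i; have := avoid (lift ord0 i); rewrite ffun_cons_lift lift0.
  case: (unliftP ord0 i) => [j ->|->]; last by rewrite ffun_cons0.
  by rewrite ffun_cons_lift lift0; apply: avoid.
by case: (a == p); case: (a \in S); case: (g ord_max \in S).
Qed.

End PathCons.

Section KilledChain.
Variables (R : realType) (Q : finType) (P : Q -> Q -> R) (S : {set Q}).

Definition killed (f : Q -> R) (q : Q) : R :=
  if q \in S then 0 else \sum_r P q r * f r.

Definition indicS (q : Q) : R := if q \in S then 1 else 0.

Local Notation K := killed.

Lemma first_hit_prob0 p : first_hit_prob P S p 0 = indicS p.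
Proof.
rewrite /first_hit_prob big_mkcond big_ffun_cons /= (bigD1 p) //= [X in _ + X]big1; last first.
  by move=> a /negbTE ap; apply: big1 => g _; rewrite ffun_cons0 ap.
rewrite addr0 (eq_bigr (fun _ => indicS p)) => [|g _].
  by rewrite big_const card_ffun card_ord /= addr0.
have -> : ord_max = ord0 :> 'I_1 by apply/val_inj.
have all_true : [forall i : 'I_1, true] by apply/forallP.
by rewrite ffun_cons0 eqxx big_ord0 all_true andbT.
Qed.

Lemma first_hit_probS p j :
  first_hit_prob P S p j.+1 = K (first_hit_prob P S ^~ j) p.
Proof.
rewrite /first_hit_prob big_mkcond big_ffun_cons /=.
under eq_bigr => a _ do under eq_bigr => g _ do
  rewrite first_hit_path_cons big_path_cons.
rewrite (bigD1 p) //= [X in _ + X]big1 ?addr0; last first.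
  by move=> a /negbTE ap; apply: big1 => g _; rewrite ap.
rewrite /killed eqxx; case: (p \in S) => /=; first by apply: big1.
under [RHS]eq_bigr => r _ do rewrite big_distrr big_mkcond /=.
rewrite exchange_big /=; apply: eq_bigr => g _.
rewrite (bigD1 (g ord0)) //= [X in _ + X]big1 ?addr0; last first.
  by move=> r /negbTE; rewrite eq_sym => ->.
by rewrite eqxx /=; case: ifP; rewrite ?mulr0.
Qed.

Lemma first_hit_prob_iter j p : first_hit_prob P S p j = iter j K indicS p.
Proof.
elim: j p => [|j IH] p; first exact: first_hit_prob0.
by rewrite first_hit_probS /=; congr K; apply: funext.
Qed.

Lemma killedD f g q : K (f \+ g) q = K f q + K g q.
Proof.
rewrite /killed; case: ifP => _; first by rewrite addr0.
by rewrite -big_split; apply: eq_bigr => r _; rewrite mulrDr.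
Qed.

Lemma killedZ c f q : K (fun r => c * f r) q = c * K f q.
Proof.
rewrite /killed; case: ifP => _; first by rewrite mulr0.
by rewrite mulr_sumr; apply: eq_bigr => r _; rewrite mulrCA.
Qed.

Lemma iter_killedD j f g q : iter j K (f \+ g) q = iter j K f q + iter j K g q.
Proof.
elim: j q => [|j IH] q //=.
by rewrite (_ : iter j K (f \+ g) = iter j K f \+ iter j K g) ?killedD //; apply: funext.
Qed.

Lemma iter_killedZ j c f q : iter j K (fun r => c * f r) q = c * iter j K f q.
Proof.
elim: j q => [|j IH] q //=.
by rewrite (_ : iter j K _ = fun r => c * iter j K f r) ?killedZ //; apply: funext.
Qed.

Hypothesis hP : stochastic P.

Local Notation x := (min_nonzero_prob P).

Lemma stochastic_ge0 q r : 0 <= P q r. Proof. by case: hP. Qed.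
Lemma stochastic_sum1 q : \sum_r P q r = 1. Proof. by case: hP. Qed.

Lemma killed1 q : K (fun=> 1) q = 1 - indicS q.
Proof.
rewrite /killed /indicS; case: ifP => _; first by rewrite subrr.
by rewrite subr0 -[RHS](stochastic_sum1 q); apply: eq_bigr => r _; rewrite mulr1.
Qed.

Lemma killed_ge0 f : (forall r, 0 <= f r) -> forall q, 0 <= K f q.
Proof.
move=> f_ge0 q; rewrite /killed; case: ifP => _ //.
by apply: sumr_ge0 => r _; rewrite mulr_ge0 ?stochastic_ge0.
Qed.

Lemma le_killed f g : (forall r, f r <= g r) -> forall q, K f q <= K g q.
Proof.
move=> le_fg q; rewrite /killed; case: ifP => _ //.
by apply: ler_sum => r _; rewrite ler_wpM2l ?stochastic_ge0.
Qed.

Lemma iter_killed_ge0 j f : (forall r, 0 <= f r) -> forall q, 0 <= iter j K f q.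
Proof. by move=> f_ge0; elim: j => [|j IH] q //=; apply: killed_ge0. Qed.

Lemma le_iter_killed j f g :
  (forall r, f r <= g r) -> forall q, iter j K f q <= iter j K g q.
Proof. by move=> le_fg; elim: j => [|j IH] q //=; apply: le_killed. Qed.

Lemma indicS_ge0 q : 0 <= indicS q.
Proof. by rewrite /indicS; case: ifP. Qed.

Fixpoint hit_within (M : nat) : Q -> R :=
  if M is M'.+1 then indicS \+ K (hit_within M') else indicS.

Lemma hit_withinS M q : hit_within M.+1 q = hit_within M q + iter M.+1 K indicS q.
Proof.
elim: M q => [|M IH] q //.
rewrite -[hit_within M.+2 q]/(indicS q + K (hit_within M.+1) q).
by rewrite {1}(funext IH) killedD addrA.
Qed.

Lemma hit_within_ge0 M q : 0 <= hit_within M q.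
Proof.
elim: M q => [|M IH] q /=; first exact: indicS_ge0.
by rewrite addr_ge0 ?indicS_ge0 ?killed_ge0.
Qed.

Lemma survival_add_hit_within M q : iter M.+1 K (fun=> 1) q + hit_within M q = 1.
Proof.
elim: M q => [|M IH] q; first by rewrite /= killed1 subrK.
rewrite [iter _ _ _ _]/= [hit_within _ _]/= addrCA -killedD.
rewrite (_ : iter M.+1 K (fun=> 1) \+ hit_within M = fun=> 1).
  by rewrite killed1 addrC subrK.
by apply: funext.
Qed.

Lemma hit_within_le1 M q : hit_within M q <= 1.
Proof.
by rewrite -(survival_add_hit_within M q) lerDr iter_killed_ge0.
Qed.

Lemma min_nonzero_prob_ge0 : 0 <= x.
Proof. by apply: le_bigmin => // qr _; apply: stochastic_ge0. Qed.

Lemma min_nonzero_prob_le1 : x <= 1.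
Proof. exact: bigmin_le_id. Qed.

Lemma min_nonzero_prob_le q r : P q r != 0 -> x <= P q r.
Proof. by move=> Pqr; apply: (bigmin_le_cond _ (j := (q, r))). Qed.

Lemma hit_within_lower M q : hit_within M q != 0 -> x ^+ M <= hit_within M q.
Proof.
elim: M q => [|M IH] q /=.
  by rewrite expr0 /indicS; case: ifP; rewrite ?eqxx.
rewrite /killed /indicS; case: ifP => qS.
  by rewrite addr0 exprn_ile1 ?min_nonzero_prob_ge0 ?min_nonzero_prob_le1.
rewrite add0r => sum_neq0.
have [r Pr_neq0] : exists r, P q r * hit_within M r != 0.
  apply/existsP; apply: contraNT sum_neq0 => /existsPn all0.
  by apply/eqP/big1 => r _; apply/eqP/negbNE/all0.
rewrite mulf_eq0 negb_or in Pr_neq0; case/andP: Pr_neq0 => Pqr hr.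
apply: le_trans (_ : P q r * hit_within M r <= _).
  by rewrite exprS ler_pM ?exprn_ge0 ?min_nonzero_prob_ge0 ?min_nonzero_prob_le ?IH.
rewrite (bigD1 r) //= lerDl sumr_ge0 // => r' _.
by rewrite mulr_ge0 ?stochastic_ge0 ?hit_within_ge0.
Qed.

Definition unreachable M : {set Q} := [set q | hit_within M q == 0].

Lemma in_unreachableS M q : (q \in unreachable M.+1) =
  (q \notin S) && [forall r, (P q r == 0) || (r \in unreachable M)].
Proof.
rewrite !inE /= /killed /indicS; case: ifP => qS /=; first by rewrite addr0 oner_eq0.
have terms_ge0 r : true -> 0 <= P q r * hit_within M r.
  by rewrite mulr_ge0 ?stochastic_ge0 ?hit_within_ge0.
rewrite add0r; apply/eqP/forallP => [sum0 r|all0].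
  by have /eqP := psumr_eq0P terms_ge0 sum0 (i := r) isT; rewrite mulf_eq0 inE.
apply: big1 => r _; case/orP: (all0 r) => [/eqP ->|]; first by rewrite mul0r.
by rewrite inE => /eqP ->; rewrite mulr0.
Qed.

Lemma unreachable_decr M : unreachable M.+1 \subset unreachable M.
Proof.
apply/fintype.subsetP => q; rewrite !inE hit_withinS => /eqP hit0.
rewrite eq_le hit_within_ge0 andbT -hit0 lerDl.
by rewrite iter_killed_ge0 // => r; exact: indicS_ge0.
Qed.

Lemma unreachable_stable M :
  unreachable M.+1 = unreachable M -> unreachable M.+2 = unreachable M.+1.
Proof. by move=> eqM; apply/setP => q; rewrite [LHS]in_unreachableS [RHS]in_unreachableS eqM. Qed.

Hypothesis Q_nonempty : (0 < #|Q|)%N.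

Lemma unreachable_stabilizes :
  exists2 i, (i < #|Q|)%N & unreachable i.+1 = unreachable i.
Proof.
have [i le_i eq_i] := decreasing_sets_stabilize unreachable_decr.
have [lt_i|le_n] := ltnP i #|Q|; first by exists i.
(* Otherwise nothing can reach S, i.e. S is empty, and the sets are constant. *)
have allT : unreachable 0 = [set: Q].
  by apply/eqP; rewrite finset.eqEcard finset.subsetT cardsT (leq_trans le_n le_i).
exists 0%N => //; apply/setP => q; rewrite in_unreachableS allT inE.
have : q \in unreachable 0 by rewrite allT inE.
rewrite inE /= /indicS; case: ifP => [_|_ _]; first by rewrite oner_eq0.
by apply/forallP => r; rewrite inE orbT.
Qed.

Local Notation dead := (unreachable #|Q|.-1).

Lemma unreachable_eq M : (#|Q|.-1 <= M)%N -> unreachable M = dead.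
Proof.
have [i lt_i eq_i] := unreachable_stabilizes.
have from_i := eq_from_stable unreachable_stable eq_i.
by move=> le_M; rewrite !from_i //; lia.
Qed.

Lemma dead_closed q : q \in dead ->
  (q \notin S) && [forall r, (P q r == 0) || (r \in dead)].
Proof.
have deadS : unreachable #|Q|.-1.+1 = dead by rewrite prednK // unreachable_eq ?leq_pred.
by rewrite -{1}deadS in_unreachableS.
Qed.

Lemma killed_dead g : {in dead, forall q, g q = 0} -> {in dead, forall q, K g q = 0}.
Proof.
move=> g0 q /dead_closed /andP [qS /forallP succ].
rewrite /killed (negbTE qS); apply: big1 => r _.
by case/orP: (succ r) => [/eqP ->|/g0 ->]; rewrite ?mul0r ?mulr0.
Qed.

Lemma iter_killed_dead j g :
  {in dead, forall q, g q = 0} -> {in dead, forall q, iter j K g q = 0}.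
Proof. by move=> g0; elim: j => [|j IH] //=; apply: killed_dead. Qed.

Lemma hit_within_dead M : {in dead, forall q, hit_within M q = 0}.
Proof.
have indicS_dead q : q \in dead -> indicS q = 0.
  by case/dead_closed/andP => /negbTE qS _; rewrite /indicS qS.
elim: M => [|M IH] q qD /=; first exact: indicS_dead.
by rewrite indicS_dead // killed_dead // add0r.
Qed.

Lemma killed_bounded g m :
  (forall r, 0 <= g r <= m) -> forall q, 0 <= K g q <= m.
Proof.
move=> g_bd q; have m_ge0 : 0 <= m by case/andP: (g_bd q); apply: le_trans.
rewrite killed_ge0 => [|r]; last by case/andP: (g_bd r).
apply: le_trans (_ : K (fun r => m * 1) q <= _).
  by apply: le_killed => r; rewrite mulr1; case/andP: (g_bd r).
by rewrite killedZ killed1 /indicS; case: ifP; rewrite ?subrr ?mulr0 ?subr0 ?mulr1.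
Qed.

Lemma iter_killed_bounded j g m :
  (forall r, 0 <= g r <= m) -> forall q, 0 <= iter j K g q <= m.
Proof. by move=> g_bd; elim: j => [|j IH] //=; apply: killed_bounded. Qed.

Lemma iter_killed_contract g m : (forall r, 0 <= g r <= m) ->
  {in dead, forall r, g r = 0} -> forall q, iter #|Q| K g q <= (1 - x ^+ #|Q|) * m.
Proof.
move=> g_bd g_dead q.
have m_ge0 : 0 <= m by case/andP: (g_bd q); apply: le_trans.
have xn_le1 : x ^+ #|Q| <= 1.
  by rewrite exprn_ile1 ?min_nonzero_prob_ge0 ?min_nonzero_prob_le1.
have [qD|q_alive] := boolP (q \in dead).
  by rewrite iter_killed_dead // mulr_ge0 // subr_ge0.
apply: le_trans (_ : iter #|Q| K (fun r => m * 1) q <= _).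
  by apply: le_iter_killed => r; rewrite mulr1; case/andP: (g_bd r).
rewrite iter_killedZ mulrC ler_wpM2r //.
have := survival_add_hit_within #|Q|.-1 q; rewrite prednK // => surv.
have /hit_within_lower hit_ge : hit_within #|Q|.-1 q != 0 by move: q_alive; rewrite inE.
have : x ^+ #|Q| <= x ^+ #|Q|.-1.
  by apply: ler_wiXn2l; rewrite ?min_nonzero_prob_ge0 ?min_nonzero_prob_le1 ?leq_pred.
lra.
Qed.

Lemma iter_killed_geometric a g : (forall r, 0 <= g r <= 1) ->
  {in dead, forall r, g r = 0} ->
  forall q, 0 <= iter (a * #|Q|) K g q <= (1 - x ^+ #|Q|) ^+ a.
Proof.
move=> g_bd g_dead; elim: a => [|a IH] q; first by rewrite mul0n expr0.
rewrite mulSn iterD exprS iter_killed_contract //; last exact: iter_killed_dead.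
by rewrite andbT iter_killed_ge0 // => r; case/andP: (IH r).
Qed.

Lemma first_hit_prob_ge0 p j : 0 <= first_hit_prob P S p j.
Proof. by rewrite first_hit_prob_iter iter_killed_ge0 // => q; apply: indicS_ge0. Qed.

Lemma tail_hit_within k M p :
  \sum_(k <= j < k + M.+1) iter j K indicS p = iter k K (hit_within M) p.
Proof.
elim: M => [|M IH]; first by rewrite addn1 big_nat1.
rewrite addnS big_nat_recr ?leq_addr // IH.
rewrite (_ : hit_within M.+1 = hit_within M \+ iter M.+1 K indicS).
  by rewrite iter_killedD iterD.
exact: funext (hit_withinS M).
Qed.

Lemma first_hit_tail_le k M p :
  \sum_(k <= j < k + M.+1) first_hit_prob P S p j <= (1 - x ^+ #|Q|) ^+ (k %/ #|Q|).
Proof.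
under eq_bigr => j _ do rewrite first_hit_prob_iter.
rewrite tail_hit_within.
have -> : iter k K (hit_within M) p =
    iter (k %/ #|Q| * #|Q|) K (iter (k %% #|Q|) K (hit_within M)) p.
  by rewrite -iterD -divn_eq.
have hit_bd r : 0 <= hit_within M r <= 1 by rewrite hit_within_ge0 hit_within_le1.
have g_bd := @iter_killed_bounded (k %% #|Q|) _ _ hit_bd.
have g_dead := @iter_killed_dead (k %% #|Q|) _ (@hit_within_dead M).
by case/andP: (@iter_killed_geometric (k %/ #|Q|) _ g_bd g_dead p).
Qed.

End KilledChain.

Lemma one_sub_le_2expR (R : realType) (y : R) :
  0 <= y <= 1 -> 1 - y <= 2 * expR (- (2 * y)).
Proof.
case/andP => y_ge0 y_le1.
have -> : - (2 * y) = 4%:R * (- y / 2) by lra.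
rewrite expRM_natl.
have half_le : 1 - y / 2 <= expR (- y / 2).
  by have := expR_ge1Dx (- y / 2); rewrite mulNr.
(* 1 - y <= 2 (1 - y/2)^4 <= 2 exp(-2y) *)
apply: le_trans (_ : 2 * (1 - y / 2) ^+ 4 <= _); last first.
  by rewrite ler_wpM2l // lerXn2r ?nnegrE ?expR_ge0 //; lra.
have s1 := sqr_ge0 ((1 - y / 2) ^+ 2 - 1 / 2).
have s2 := sqr_ge0 ((1 - y / 2) - 1 / 2).
rewrite !expr2 in s1 s2; rewrite (_ : 4 = 2 + 2)%N // exprD !expr2.
nra.
Qed.

Lemma expn_one_sub_le_2expR (R : realType) (y : R) (n k a : nat) :
  0 <= y <= 1 -> (0 < n)%N -> (0 < a)%N -> (k < a.+1 * n)%N ->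
  (1 - y) ^+ a <= 2 * expR (- y / n%:R) ^+ k.
Proof.
move=> y_bd n_gt0 a_gt0 lt_k; have /andP [y_ge0 y_le1] := y_bd.
rewrite -(prednK a_gt0) exprS.
have omy_ge0 : 0 <= 1 - y by rewrite subr_ge0.
apply: le_trans (_ : 2 * expR (- (2 * y)) * expR (- y) ^+ a.-1 <= _).
  apply: ler_pM; rewrite ?exprn_ge0 ?one_sub_le_2expR //.
  by rewrite lerXn2r ?nnegrE ?expR_ge0 ?expR_ge1Dx.
rewrite -mulrA ler_wpM2l // -!expRM_natl -expRD ler_expR.
have n_pos : 0 < n%:R :> R by rewrite ltr0n.
have : k%:R <= a.-1%:R * n%:R + 2 * n%:R :> R.
  by rewrite -natrM -[2]/(2%:R) -natrM -natrD ler_nat -mulnDl addn2 prednK // ltnW.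
move=> le_k; rewrite mulrA ler_pdivlMr //.
nra.
Qed.

Theorem mainTheorem3 (R : realType) (Q : finType) (P : Q -> Q -> R)
    (hP : stochastic P) (p : Q) (S : {set Q}) (k : nat) :
  (#|Q| <= k)%N ->
  (\sum_(k <= j <oo) (first_hit_prob P S p j)%:E <=
   (2 * (expR (- (min_nonzero_prob P) ^+ #|Q| / #|Q|%:R)) ^+ k)%:E)%E.
Proof.
move=> n_le_k.
have n_gt0 : (0 < #|Q|)%N by apply/card_gt0P; exists p.
have xn_bd : 0 <= min_nonzero_prob P ^+ #|Q| <= 1.
  by rewrite exprn_ge0 ?exprn_ile1 ?(min_nonzero_prob_ge0 hP) ?min_nonzero_prob_le1.
apply: lime_le.
  by apply: is_cvg_nneseries => j _ _; rewrite lee_fin first_hit_prob_ge0.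
apply: nearW => N; rewrite sumEFin lee_fin.
have [N_le_k|k_lt_N] := leqP N k.
  by rewrite big_geq // mulr_ge0 // exprn_ge0 // expR_ge0.
rewrite (_ : N = k + (N - k).-1.+1)%N; last by lia.
apply: le_trans (first_hit_tail_le S hP n_gt0 k _ p) _.
by apply: expn_one_sub_le_2expR; rewrite ?divn_gt0 ?ltn_ceil.
Qed.
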